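(* Let $q\ge 1$ and $s \ge 0$ be integers and assume that the polynomials $L_0,\dots,L_q$ defined in the context are linearly independent. For $k=0,\dots,q$ and $m=0,\dots,2^s-1$ define $$e_{k,m}(z) = \frac{1}{\sqrt{(2k+1)2^s}}\, r_q^m(z2^{-s})\, D_q^{-1}(z2^{-s})\, L_k(z2^{-s}), \qquad \tilde e_{k,m}(z) = D_q^{2^s}(z2^{-s})\, e_{k,m}(z),$$ and $\Pi^m = \{\tilde e_{0,m},\dots,\tilde e_{q,m}\}$. Then $$\dim \operatorname{span} \bigcup_{m=0}^{2^s-1}\Pi^m = q\,2^s + 1.$$
   Context: $N_q(z) = \sum_{j=0}^q \frac{(2q-j)!\,q!}{(2q)!\,j!\,(q-j)!} z^j$, $D_q(z) = N_q(-z)$, $r_q = N_q/D_q$ (diagonal Padé approximant of $e^z$). For scalar $z$ (not a zero of $D_q$), let $C_0(z),\dots,C_q(z)$ be the solution of the linear system, with $\tilde C_k = C_k/(2k+1)$, $\tilde C_{q+1}=0$: $\sum_{k=0}^q(-1)^k(2k+1)\tilde C_k = 1$ and, for $j=1,\dots,q$, $-z\tilde C_{j-1} + (4j+2)\tilde C_j + z\tilde C_{j+1} = 0$. These are rational functions of the form $C_k(z) = L_k(z)/D_q(z)$ with $L_k$ polynomials of degree at most $q$, and $\sum_k C_k(z) = r_q(z)$. The functions $\tilde e_{k,m}$ are polynomials of degree at most $q2^s$. *)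

From HB Require Import structures.
From mathcomp Require Import all_boot all_order all_algebra.
From mathcomp Require Import qpoly.
Set Implicit Arguments. Unset Strict Implicit. Unset Printing Implicit Defensive.
Import Order.TTheory GRing.Theory Num.Theory.
Local Open Scope ring_scope.

Section PadeDefs.
Variable C : numClosedFieldType.

Definition Nq (q : nat) : {poly C} :=
  \poly_(j < q.+1)
    (((2 * q - j)`! * q`!)%:R / (((2 * q)`! * j`! * (q - j)`!)%:R)).

Definition Dq (q : nat) : {poly C} := Nq q \Po (- 'X).

(* r_q = N_q / D_q, as a scalar function (only used where D_q(z) <> 0) *)
Definition rq (q : nat) (z : C) : C := (Nq q).[z] / (Dq q).[z].

Definition Ck (q : nat) (L : nat -> {poly C}) (z : C) (k : nat) : C :=
  (L k).[z] / (Dq q).[z].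

Definition Ctil (q : nat) (L : nat -> {poly C}) (z : C) (k : nat) : C :=
  if (k <= q)%N then Ck q L z k / (2 * k + 1)%:R else 0.

Definition Csystem (q : nat) (L : nat -> {poly C}) (z : C) : Prop :=
  (\sum_(k < q.+1) (-1) ^+ k * (2 * k + 1)%:R * Ctil q L z k = 1) /\
  (forall j : nat, (1 <= j <= q)%N ->
     - z * Ctil q L z j.-1 + (4 * j + 2)%:R * Ctil q L z j
       + z * Ctil q L z j.+1 = 0).

(* tilde e_{k,m}(z) = D_q^{2^s}(z 2^-s) e_{k,m}(z), where
   e_{k,m}(z) = ((2k+1) 2^s)^{-1/2} r_q^m(z 2^-s) D_q^{-1}(z 2^-s) L_k(z 2^-s).
   Since m <= 2^s - 1, this is the polynomial
   ((2k+1)2^s)^{-1/2} N_q^m(w) D_q^{2^s-1-m}(w) L_k(w),  w = z 2^-s. *)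
Definition etilde (q s : nat) (L : nat -> {poly C}) (k m : nat) : {poly C} :=
  (sqrtC ((2 * k + 1) * 2 ^ s)%:R)^-1 *:
    ((Nq q ^+ m * Dq q ^+ (2 ^ s - 1 - m) * L k) \Po ((2 ^ s)%:R^-1 *: 'X)).

(* a size bound large enough that embedding into {poly_n C} loses nothing *)
Definition ebound (q s : nat) (L : nat -> {poly C}) : nat :=
  (\sum_(k < q.+1) \sum_(m < 2 ^ s) size (etilde q s L k m))%N.

Definition PiFamily (q s : nat) (L : nat -> {poly C}) : seq {poly_(ebound q s L) C} :=
  [seq npolyp (ebound q s L) (etilde q s L k m)
     | k <- iota 0 q.+1, m <- iota 0 (2 ^ s)].

End PadeDefs.
Arguments Nq {C} q.
Arguments Dq {C} q.
Arguments rq {C} q z.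

From HB Require Import structures.
From mathcomp Require Import all_boot all_order all_algebra.
From mathcomp Require Import qpoly.
From mathcomp Require Import ring zify.

(* The products N_q^m D_q^(2^s-1-m) L_k span all polynomials of degree at most
   q 2^s: since N_q and D_q are coprime, a Bezout identity splits a polynomial of
   degree <= q(n+1) as a D_q + b N_q with deg a < q and deg b <= qn, and
   induction on n does the rest.  Coprimality comes from
   W = N_q D_q' - N_q' D_q + N_q D_q = D_q^2 (r_q - r_q'): Kummer's equation for
   N_q, and its counterpart for D_q(z) = N_q(-z), give z W' = 2q W, so
   W = c z^(2q) with c <> 0, whereas a common root of N_q and D_q would be a
   nonzero root of W.  The substitution z -> z/2^s is invertible and each
   e~_{k,m} has degree at most q 2^s, so their span is exactly that space. *)

Set Implicit Arguments.
Unset Strict Implicit.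
Unset Printing Implicit Defensive.

Import GRing.Theory Num.Theory.
Local Open Scope ring_scope.

Section NpolyTruncation.
Variables (R : nzRingType) (n : nat).

Fact npolyp_is_linear : linear (npolyp n : {poly R} -> {poly_n R}).
Proof.
move=> a p r; apply/npolyP => i.
rewrite [in RHS](linearP (@polyn R n)) coefD coefZ !coef_npolyp coefD coefZ.
by case: ifP; rewrite ?mulr0 ?addr0.
Qed.

HB.instance Definition _ :=
  GRing.isLinear.Build R {poly R} {poly_n R} _ (npolyp n) npolyp_is_linear.

Lemma size_npolyp_le (p : {poly R}) : (size (npolyp n p) <= size p)%N.
Proof. by apply/leq_sizeP => i le_p_i; rewrite coef_npolyp nth_default // if_same. Qed.

End NpolyTruncation.

Lemma dim_span_npoly (K : fieldType) n d (S : seq {poly_n K}) :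
  (d <= n)%N ->
  {in S, forall p : {poly_n K}, size p <= d}%N ->
  (forall p : {poly K}, (size p <= d)%N -> npolyp n p \in span S) ->
  \dim (span S) = d.
Proof.
move=> le_dn size_S span_S.
pose B := [seq npolyp n ('X^i : {poly K}) | i <- iota 0 d].
pose B' := [seq npolyp n ('X^i : {poly K}) | i <- iota d (n - d)].
have free_B : free B.
  have npolyXE : npolyX K n = B ++ B' :> seq _.
    by rewrite -map_cat -iotaD subnKC // -val_enum_ord -map_comp.
  by apply: (@catl_free _ _ B'); rewrite -npolyXE npolyX_free.
suff -> : span S = span B by rewrite (eqP free_B) size_map size_iota.
apply/eqP; rewrite eqEsubv; apply/andP; split; apply/span_subvP => p.
  move=> /size_S size_p.
  have -> : p = npolyp n (take_poly d p).
    by apply: val_inj; rewrite /= take_poly_id // npolypK // size_npoly.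
  rewrite /take_poly poly_def linear_sum; apply: rpred_sum => i _.
  rewrite linearZ; apply/rpredZ/memv_span.
  by apply: map_f; rewrite mem_iota add0n ltn_ord.
move=> /mapP [i]; rewrite mem_iota => /andP [_ lt_id] ->.
by apply: span_S; rewrite size_polyXn.
Qed.

Lemma free_polys_span (K : fieldType) n (L : nat -> {poly K}) :
  (forall k, (k <= n)%N -> (size (L k) <= n.+1)%N) ->
  (forall a : nat -> K,
     \sum_(k < n.+1) a k *: L k = 0 -> forall k, (k <= n)%N -> a k = 0) ->
  forall P : {poly K}, (size P <= n.+1)%N ->
  exists a : nat -> K, P = \sum_(k < n.+1) a k *: L k.
Proof.
move=> size_L free_L P size_P.
pose X := [tuple npolyp n.+1 (L i) | i < n.+1].
have XE (i : 'I_n.+1) : X`_i = L i :> {poly K}.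
  by rewrite -tnth_nth tnth_mktuple npolypK // size_L // -ltnS.
have polyn_comb (c : 'I_n.+1 -> K) :
    \sum_(i < n.+1) c i *: X`_i = \sum_(i < n.+1) c i *: L i :> {poly K}.
  by rewrite linear_sum; apply: eq_bigr => i _; rewrite linearZ /= XE.
have free_X : free X.
  apply/freeP => c /(congr1 (@polyn _ _)); rewrite polyn_comb linear0 => comb0 i.
  have := free_L (fun k => c (inord k)) _ i (leq_ord i); rewrite inord_val; apply.
  by apply: etrans comb0; apply: eq_bigr => k _; rewrite inord_val.
have basis_X : basis_of fullv X.
  by rewrite basisEfree free_X subvf size_tuple dim_polyn /=.
exists (fun k => coord X (inord k) (npolyp n.+1 P)).
rewrite -[LHS](npolypK size_P) {1}(coord_basis basis_X (memvf (npolyp n.+1 P))).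
by rewrite polyn_comb; apply: eq_bigr => i _; rewrite inord_val.
Qed.

Lemma size_exp_mul_leq (R : nzSemiRingType) d (p r l : {poly R}) m j :
  (size p <= d.+1)%N -> (size r <= d.+1)%N ->
  (size (p ^+ m * r ^+ j * l)%R <= d * (m + j) + size l)%N.
Proof.
move=> size_p size_r.
have le_pm : ((size p).-1 * m <= d * m)%N by apply: leq_mul; lia.
have le_rj : ((size r).-1 * j <= d * j)%N by apply: leq_mul; lia.
have := size_poly_exp_leq p m; have := size_poly_exp_leq r j.
have := size_polyMleq (p ^+ m) (r ^+ j); have := size_polyMleq (p ^+ m * r ^+ j) l.
lia.
Qed.

Section CoprimeSpan.
Variables (K : fieldType) (d : nat) (p r : {poly K}).
Hypotheses (coprime_pr : coprimep p r) (size_p : size p = d.+1)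
  (size_r : (size r <= d.+1)%N).

Lemma coprimep_decomp e (F : {poly K}) : (d <= e)%N -> (size F <= e + d.+1)%N ->
  exists a b : {poly K}, [/\ (size a <= d)%N, (size b <= e.+1)%N & F = a * r + b * p].
Proof.
move=> le_de size_F.
have p_neq0 : p != 0 by rewrite -size_poly_gt0 size_p.
have [a [b [size_a F_eq]]] : exists a b : {poly K}, (size a <= d)%N /\ F = a * r + b * p.
  have [[u v] /= uv1] := Bezout_eq1_coprimepP _ _ coprime_pr.
  exists ((F * v) %% p), (F * u + (F * v) %/ p * r); split.
    by rewrite -ltnS -size_p ltn_modpN0.
  rewrite -[F in LHS]mulr1 -uv1 mulrDr mulrA [F * (v * r)]mulrA.
  by rewrite {1}(divp_eq (F * v) p); ring.
exists a, b; split=> //.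
have [->|b_neq0] := eqVneq b 0; first by rewrite size_poly0.
have : (size (b * p)%R <= e + d.+1)%N.
  rewrite (_ : b * p = F - a * r); last by rewrite F_eq; ring.
  apply: leq_trans (size_polyD _ _) _; rewrite size_polyN geq_max size_F.
  by apply: leq_trans (size_polyMleq a r) _; lia.
by rewrite (size_mul b_neq0 p_neq0) size_p addnS /= addnS -addSn leq_add2r.
Qed.

Lemma coprimep_power_span n (F : {poly K}) : (size F <= (d * n.+1).+1)%N ->
  exists P : nat -> {poly K}, (forall m, size (P m) <= d.+1)%N /\
    F = \sum_(m < n.+1) p ^+ m * r ^+ (n - m) * P m.
Proof.
elim: n F => [|n IHn] F size_F.
  exists (fun=> F); split=> [_|]; first by rewrite muln1 in size_F.
  by rewrite big_ord1 !expr0 !mul1r.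
have size_F' : (size F <= d * n.+1 + d.+1)%N by lia.
have [a [b [size_a size_b ->]]] :=
  @coprimep_decomp _ F (leq_pmulr d (ltn0Sn n)) size_F'.
have size_a' : (size a <= (d * n.+1).+1)%N by lia.
have [A [size_A ->]] := IHn a size_a'.
have [B [size_B ->]] := IHn b size_b.
exists (fun m => (if (m < n.+1)%N then A m else 0) + (if m is m'.+1 then B m' else 0)).
split.
  move=> m; apply: leq_trans (size_polyD _ _) _; rewrite geq_max.
  by case: ifP => _; case: m => [|m]; rewrite ?size_poly0 ?size_A ?size_B.
rewrite (eq_bigr _ (fun m _ => mulrDr _ _ _)) big_split /=.
rewrite [X in _ = X + _]big_ord_recr [X in _ = _ + X]big_ord_recl /=.
rewrite ltnn mulr0 addr0 mulr0 add0r !mulr_suml.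
congr (_ + _); apply: eq_bigr => i _ /=.
  rewrite ltn_ord subSn; last by have := ltn_ord i; lia.
  by rewrite exprS; ring.
by rewrite subSS exprS; ring.
Qed.

End CoprimeSpan.

Lemma coef_Xderiv (R : nzRingType) (p : {poly R}) i : ('X * p^`())`_i = p`_i *+ i.
Proof. by rewrite coefXM; case: i => [|i]; rewrite ?mulr0n // coef_deriv. Qed.

Lemma Xderiv_eq_natmul_monomial (R : numDomainType) n (p : {poly R}) :
  'X * p^`() = p *+ n -> p = p`_n *: 'X^n.
Proof.
move=> Euler_p; apply/polyP => i; rewrite coefZ coefXn.
have [->|ne_in] := eqVneq i n; first by rewrite mulr1.
have /eqP := congr1 (fun r : {poly R} => r`_i) Euler_p.
rewrite /= coef_Xderiv coefMn -[p`_i *+ i]mulr_natr -[p`_i *+ n]mulr_natr.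
rewrite -subr_eq0 -mulrBr mulf_eq0 subr_eq0 eqr_nat (negPf ne_in) orbF mulr0.
by move/eqP.
Qed.

Lemma eq_of_sub_mul (R : comPzRingType) (u v x y c : R) :
  u = v -> x - y = c * (u - v) -> x = y.
Proof. by move=> -> /eqP; rewrite subrr mulr0 subr_eq0 => /eqP. Qed.

Section Pade.
Context {C : numClosedFieldType}.
Implicit Types (q j : nat).

Lemma fact_natr_neq0 n : n`!%:R != 0 :> C.
Proof. by rewrite pnatr_eq0 -lt0n fact_gt0. Qed.

Lemma coef_Nq q j : (Nq q : {poly C})`_j =
  if (j <= q)%N then ((2 * q - j)`! * q`!)%:R / ((2 * q)`! * j`! * (q - j)`!)%:R
  else 0.
Proof. by rewrite coef_poly. Qed.

Lemma coef_Nq_rec q j :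
  j.+1%:R * ((2 * q)%:R - j%:R) * (Nq q : {poly C})`_j.+1
  = (q%:R - j%:R) * (Nq q)`_j.
Proof.
rewrite !coef_Nq; have [lt_jq|le_qj] := ltnP j q.
  rewrite ltnW // -!natrB; [|lia|lia].
  rewrite -(subnSK lt_jq) -[(2 * q - j)%N](@subnSK j) ?factS ?natrM; last by lia.
  by field; rewrite !nat1r !(fact_natr_neq0, pnatr_eq0).
rewrite mulr0; case: leqP => [le_jq|_]; last by rewrite mulr0.
have -> : j = q by lia.
by rewrite subrr mul0r.
Qed.

Lemma size_Nq q : size (Nq q : {poly C}) = q.+1.
Proof.
rewrite size_poly_eq // mulf_neq0 ?invr_eq0 // natrM mulf_neq0 ?fact_natr_neq0 //.
by rewrite !natrM !mulf_neq0 ?fact_natr_neq0.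
Qed.

Lemma size_Dq q : size (Dq q : {poly C}) = q.+1.
Proof. by rewrite size_comp_poly2 ?size_Nq // size_polyN size_polyX. Qed.

Lemma Nq_coef0 q : (Nq q : {poly C})`_0 = 1.
Proof.
by rewrite coef_Nq !subn0 fact0 muln1 divff // natrM mulf_neq0 ?fact_natr_neq0.
Qed.

Lemma Nq_kummer q :
  'X * (Nq q : {poly C})^`()^`()
  = (2 * q)%:R * (Nq q)^`() + 'X * (Nq q)^`() - q%:R * Nq q.
Proof.
apply/polyP => i; rewrite coefB coefD !mulr_natl !coefMn !coef_Xderiv coef_deriv.
by apply: (@eq_of_sub_mul _ _ _ _ _ (-1) (coef_Nq_rec q i)); ring.
Qed.

Lemma Dq_kummer q :
  'X * (Dq q : {poly C})^`()^`()
  = (2 * q)%:R * (Dq q)^`() - 'X * (Dq q)^`() + q%:R * Dq q.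
Proof.
have D'E : (Dq q)^`() = - ((Nq q)^`() \Po - 'X :> {poly C}).
  by rewrite deriv_comp derivN derivX mulrN1.
have D''E : (Dq q)^`()^`() = (Nq q)^`()^`() \Po - 'X :> {poly C}.
  by rewrite D'E derivN deriv_comp derivN derivX mulrN1 opprK.
have N'E : (Nq q)^`() \Po - 'X = - (Dq q)^`() :> {poly C} by rewrite D'E opprK.
have := congr1 (comp_poly (- 'X)) (Nq_kummer q).
rewrite rmorphB rmorphD !rmorphM /= !rmorph_nat comp_polyX -D''E N'E.
by move=> kummer; rewrite -[LHS]opprK -mulNr kummer; ring.
Qed.

Definition pade_wronskian q : {poly C} :=
  Nq q * (Dq q)^`() - (Nq q)^`() * Dq q + Nq q * Dq q.

Lemma pade_wronskian_euler q :
  'X * (pade_wronskian q)^`() = pade_wronskian q *+ (2 * q).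
Proof.
rewrite /pade_wronskian; set N : {poly C} := Nq q; set D : {poly C} := Dq q.
have -> : 'X * (N * D^`() - N^`() * D + N * D)^`()
          = N * ('X * D^`()^`()) - ('X * N^`()^`()) * D + 'X * (N^`() * D + N * D^`()).
  by rewrite !(derivD, derivN, derivM); ring.
by rewrite Dq_kummer Nq_kummer -/N -/D -mulr_natl; ring.
Qed.

Lemma pade_wronskian_lead q : (pade_wronskian q)`_(2 * q) != 0.
Proof.
have [N_neq0 D_neq0] : Nq q != 0 :> {poly C} /\ Dq q != 0 :> {poly C}.
  by rewrite -!size_poly_gt0 size_Nq size_Dq.
have low_deg (f g : {poly C}) : f != 0 -> (size f <= q.+1)%N -> (size g <= q.+1)%N ->
    (g * f^`())`_(2 * q) = 0.
  move=> f_neq0 size_f size_g; rewrite nth_default //.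
  apply: leq_trans (size_polyMleq _ _) _.
  by have := lt_size_deriv f_neq0; lia.
rewrite /pade_wronskian coefD coefB low_deg ?size_Nq ?size_Dq //.
rewrite [_^`() * _]mulrC low_deg ?size_Nq ?size_Dq // subrr add0r.
have size_ND : size (Nq q * Dq q : {poly C}) = (2 * q).+1.
  by rewrite size_mul // size_Nq size_Dq; lia.
have -> : (2 * q)%N = (size (Nq q * Dq q : {poly C})).-1 by rewrite size_ND.
by rewrite -lead_coefE lead_coefM mulf_neq0 ?lead_coef_eq0.
Qed.

Lemma coprimep_Nq_Dq q : coprimep (Nq q : {poly C}) (Dq q).
Proof.
apply: Pdiv.ClosedField.root_coprimep => a /rootP Na; apply/eqP => Da.
have a_neq0 : a != 0.
  by apply: contra_eq_neq Na => ->; rewrite horner_coef0 Nq_coef0 oner_neq0.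
have /eqP : (pade_wronskian q).[a] = 0.
  by rewrite /pade_wronskian !hornerE Na Da !(mul0r, mulr0) subrr addr0.
rewrite (Xderiv_eq_natmul_monomial (pade_wronskian_euler q)) hornerZ hornerXn.
by rewrite mulf_eq0 expf_eq0 (negPf (pade_wronskian_lead q)) (negPf a_neq0) andbF.
Qed.

End Pade.

Section ScaledPadeProducts.
Variables (C : numClosedFieldType) (q s : nat) (L : nat -> {poly C}).
Hypothesis size_L : forall k, (k <= q)%N -> (size (L k) <= q.+1)%N.
Hypothesis free_L : forall a : nat -> C,
  \sum_(k < q.+1) a k *: L k = 0 -> forall k, (k <= q)%N -> a k = 0.

Lemma size_etilde k m : (k <= q)%N -> (m < 2 ^ s)%N ->
  (size (etilde q s L k m) <= (q * 2 ^ s).+1)%N.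
Proof.
move=> le_kq lt_ms; apply: leq_trans (size_scale_leq _ _) _.
rewrite size_comp_poly2; last first.
  by rewrite size_scale ?size_polyX // invr_eq0 pnatr_eq0 -lt0n expn_gt0.
apply: leq_trans (size_exp_mul_leq _ _ _ (eq_leq (size_Nq q)) (eq_leq (size_Dq q))) _.
rewrite subnKC; last by lia.
by have := size_L le_kq; have := expn_gt0 2 s; nia.
Qed.

Lemma size_etilde_le_ebound k m : (k <= q)%N -> (m < 2 ^ s)%N ->
  (size (etilde q s L k m) <= ebound q s L)%N.
Proof.
move=> le_kq lt_ms; rewrite /ebound (bigD1 (Ordinal (le_kq : (k < q.+1)%N))) //=.
by rewrite (bigD1 (Ordinal lt_ms)) //= -addnA leq_addr.
Qed.

Lemma etilde_span (F : {poly C}) : (size F <= (q * 2 ^ s).+1)%N ->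
  exists a : 'I_(2 ^ s) -> nat -> C,
    F = \sum_(m < 2 ^ s) \sum_(k < q.+1) a m k *: etilde q s L k m.
Proof.
move=> size_F; set mu : C := (2 ^ s)%:R.
have mu_neq0 : mu != 0 by rewrite pnatr_eq0 -lt0n expn_gt0.
have two_s : (2 ^ s - 1).+1 = (2 ^ s)%N by rewrite subn1 prednK ?expn_gt0.
pose G := F \Po (mu *: 'X).
have FE : F = G \Po (mu^-1 *: 'X).
  by rewrite -comp_polyA comp_polyZ comp_polyX scalerA divff // scale1r comp_polyXr.
have size_G : (size G <= (q * (2 ^ s - 1).+1).+1)%N.
  by rewrite size_comp_poly2 ?size_scale ?size_polyX // two_s.
have [P [size_P GE]] :=
  coprimep_power_span (coprimep_Nq_Dq q) (size_Nq q) (eq_leq (size_Dq q)) size_G.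
have /fin_all_exists [b bE] : forall m : 'I_(2 ^ s),
    exists b : nat -> C, P m = \sum_(k < q.+1) b k *: L k.
  by move=> m; apply: free_polys_span size_L free_L _ (size_P m).
exists (fun m k => b m k * sqrtC ((2 * k + 1) * 2 ^ s)%:R).
rewrite FE GE two_s linear_sum; apply: eq_bigr => m _.
rewrite bE mulr_sumr linear_sum; apply: eq_bigr => k _.
rewrite /etilde scalerA mulfK ?sqrtC_eq0 ?pnatr_eq0 ?muln_eq0 ?addn1 ?expn_eq0 //.
by rewrite -scalerAr linearZ.
Qed.

Lemma ebound_gt_degree : (q * 2 ^ s < ebound q s L)%N.
Proof.
rewrite ltnNge; apply/negP => le_ebound.
have [a XE] : exists a : 'I_(2 ^ s) -> nat -> C, 'X^(q * 2 ^ s) =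
    \sum_(m < 2 ^ s) \sum_(k < q.+1) a m k *: etilde q s L k m.
  by apply: etilde_span; rewrite size_polyXn.
have /eqP := congr1 (fun p : {poly C} => p`_(q * 2 ^ s)) XE.
rewrite /= coefXn eqxx coef_sum big1 ?oner_eq0 // => m _.
rewrite coef_sum big1 // => k _; rewrite coefZ nth_default ?mulr0 //.
exact: leq_trans (size_etilde_le_ebound (ltn_ord k) (ltn_ord m)) le_ebound.
Qed.

End ScaledPadeProducts.

Theorem proposition4 (C : numClosedFieldType) (q s : nat) (L : nat -> {poly C}) :
  (1 <= q)%N ->
  (* L_0, ..., L_q are polynomials of degree at most q *)
  (forall k, (k <= q)%N -> (size (L k) <= q.+1)%N) ->
  (* C_k = L_k / D_q solves the linear system at every z with D_q(z) <> 0 *)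
  (forall z : C, (Dq q).[z] != 0 -> Csystem q L z) ->
  (* L_0, ..., L_q are linearly independent *)
  (forall a : nat -> C,
     \sum_(k < q.+1) a k *: L k = 0 -> forall k, (k <= q)%N -> a k = 0) ->
  \dim (span (PiFamily q s L)) = (q * 2 ^ s).+1.
Proof.
(* Only the degree bound and the independence of the L_k matter: the result
   also holds for q = 0 and for L_k unrelated to the linear system. *)
move=> _ size_L _ free_L.
apply: dim_span_npoly; first exact: ebound_gt_degree.
  move=> _ /allpairsP [[k m] [k_q m_s ->]] /=.
  rewrite !mem_iota /= !add0n in k_q m_s.
  exact: leq_trans (size_npolyp_le _ _) (size_etilde size_L k_q m_s).
move=> p /(etilde_span size_L free_L) [a ->].
rewrite linear_sum; apply: rpred_sum => m _; rewrite linear_sum; apply: rpred_sum => k _.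
rewrite linearZ; apply/rpredZ/memv_span.
by apply: allpairs_f; rewrite mem_iota add0n ltn_ord.
Qed.
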